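(* Let $w\in S_n$ be a Grassmannian permutation, i.e. a permutation with at most one descent (at most one $p$ with $w(p)>w(p+1)$). Then for $u,v$ in the strong Bruhat interval $[e,w]$, there is an edge of the Bruhat interval polytope $\mathsf{Q}_{e,w}$ between the vertices $u$ and $v$ if and only if there exist $i<\ell$ such that $v=(i\,\ell)u$ and, for each value $m\in\{i+1,\dots,\ell-1\}$, $u^{-1}(m)=v^{-1}(m)=w^{-1}(m)$ (i.e. each of the values $i+1,\dots,\ell-1$ occupies in $u$ and in $v$ exactly the same position as in $w$).
   Context: For $u\le v$ in the strong Bruhat order on $S_n$, the Bruhat interval polytope is $\mathsf{Q}_{u,v}=\operatorname{conv}\{(z(1),\dots,z(n)): z\in S_n,\ u\le z\le v\}\subset\mathbb{R}^n$, where a permutation $z$ is identified with the point $(z(1),\dots,z(n))$. For a transposition $(i\,\ell)$ and $u\in S_n$, $(i\,\ell)u$ denotes $(i\,\ell)\circ u$, the permutation obtained from $u$ by swapping the values $i$ and $\ell$. *)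

From HB Require Import structures.
From mathcomp Require Import all_boot all_order all_algebra all_fingroup.
Set Implicit Arguments. Unset Strict Implicit. Unset Printing Implicit Defensive.
Import Order.TTheory GRing.Theory Num.Theory.

(* S_n is {perm 'I_n}; value k : 'I_n stands for k+1 in {1,...,n}. *)

Definition inv_count n (u : {perm 'I_n}) : nat :=
  #|[set p : 'I_n * 'I_n | (p.1 < p.2) && (u p.2 < u p.1)]|.

Definition bruhat_step n : rel {perm 'I_n} :=
  fun u v => [exists i : 'I_n, exists j : 'I_n,
     (i < j) && (v == (u * tperm i j)%g)] && (inv_count u < inv_count v).

Definition bruhat_le n (u v : {perm 'I_n}) : bool := connect (@bruhat_step n) u v.

Definition grassmannian n (w : {perm 'I_n}) : bool :=
  #|[set p : 'I_n | [exists q : 'I_n, (val q == p.+1) && (w q < w p)]]| <= 1.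

Local Open Scope ring_scope.

Definition perm_pt (R : nzRingType) n (z : {perm 'I_n}) : 'rV[R]_n :=
  \row_i ((z i).+1)%:R.

Definition conv (R : realFieldType) n (S : seq 'rV[R]_n) (x : 'rV[R]_n) : Prop :=
  exists lam : 'I_(size S) -> R,
    (forall k, 0 <= lam k) /\ \sum_k lam k = 1 /\ x = \sum_k lam k *: S`_k.

Definition dotv (R : nzRingType) n (c x : 'rV[R]_n) : R := \sum_i c 0 i * x 0 i.

Definition face (R : realFieldType) n (S : seq 'rV[R]_n) (c x : 'rV[R]_n) : Prop :=
  conv S x /\ forall y, conv S y -> dotv c y <= dotv c x.

Definition is_edge (R : realFieldType) n (S : seq 'rV[R]_n) (a b : 'rV[R]_n) : Prop :=
  a <> b /\ exists c : 'rV[R]_n, forall x, face S c x <-> conv [:: a; b] x.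

Definition bip_points (R : realFieldType) n (u v : {perm 'I_n}) : seq 'rV[R]_n :=
  [seq perm_pt R z | z <- enum [pred z | bruhat_le u z && bruhat_le z v]].

From HB Require Import structures.
From mathcomp Require Import all_boot all_order all_algebra all_fingroup.
From mathcomp Require Import zify ring lra.
Import Order.TTheory GRing.Theory Num.Theory.
Set Implicit Arguments. Unset Strict Implicit. Unset Printing Implicit Defensive.

(* A Grassmannian [w] is increasing on the positions [0, p) and [p, n) for
   some [p].  The interval [e, w] is then the box of the permutations [z] with
   [z j <= w j] for [j < p] and [w j <= z j] for [p <= j]: a Bruhat step down
   from a box permutation stays in the box, and every box permutation other
   than [w] goes up by a transposition inside the box.
   An edge of the polytope is the set of maximisers of a linear functional
   [c].  Slicing a permutation into the sets of positions holding a value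
   above [k], one sees that [u] maximises [c] on the box as soon as
   [c y <= c x] whenever [u y <= k < u x] and the box allows both positions to
   move across the level [k].  If [u] and [v] are the only maximisers, a pair
   violating this for [u] can be narrowed down to a transposition improving
   [u] inside the box, which must be [v]; a value strictly between the two
   swapped ones that is not at its place in [w] would produce a further
   maximiser.  Conversely, for such a transposition an explicit functional,
   increasing with the values of [u], singles out [u] and [v]. *)

Section Inversions.
Variable n : nat.
Implicit Types (z : {perm 'I_n}) (a b t x y : 'I_n).

Lemma mulg_tpermJ z x y : (z * tperm (z x) (z y))%g = (tperm x y * z)%g.
Proof. by rewrite -tpermJ /conjg !mulgA mulgV mul1g. Qed.

Lemma inv_count_le z : inv_count z <= n * n.
Proof. by rewrite /inv_count (leq_trans (max_card _)) // card_prod card_ord. Qed.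

Lemma inv_count_tperm z x y : x < y -> z x < z y ->
  inv_count z < inv_count (tperm x y * z)%g.
Proof.
move=> lxy lzxy; set s := tperm x y; set z' := (s * z)%g.
have z'E t : z' t = z (s t) by rewrite permM.
have sK t : s (s t) = t by rewrite tpermK.
pose Inv (u : {perm 'I_n}) := [set q : 'I_n * 'I_n | (q.1 < q.2) && (u q.2 < u q.1)].
(* An inversion of [z] is sent to an inversion of [z'] other than [(x, y)]. *)
pose swap_pair (q : 'I_n * 'I_n) := if s q.1 < s q.2 then (s q.1, s q.2) else q.
have inj : {in Inv z &, injective swap_pair}.
  move=> [p1 q1] [p2 q2]; rewrite !inE /= /swap_pair /=.
  move=> /andP[lt1 _] /andP[lt2 _].
  case: ifP => c1; case: ifP => c2 //.
  - by case=> /(congr1 s); rewrite !sK => -> /(congr1 s); rewrite !sK => ->.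
  - by case=> e1 e2; move: c2; rewrite -e1 -e2 !sK lt1.
  - by case=> e1 e2; move: c1; rewrite e1 e2 !sK lt2.
have sub : swap_pair @: Inv z \subset Inv z' :\ (x, y).
  apply/subsetP=> q' /imsetP[[p q] pq ->]; move: pq; rewrite !inE /= /swap_pair.
  move=> /andP[lpq lzqp]; case: ifP => c /=.
  - rewrite !z'E !sK c lzqp !andbT.
    apply/negP=> /eqP[ep eq]; move: lpq; rewrite -(sK p) -(sK q) ep eq.
    by rewrite /s tpermL tpermR ltnNge (ltnW lxy).
  - have nxy : (p, q) != (x, y).
      by apply/negP=> /eqP[ep eq]; move: lzqp; rewrite ep eq ltnNge (ltnW lzxy).
    rewrite lpq nxy /= !z'E; move: c; rewrite /s /=.
    case: (tpermP x y p) => [ep|ep|npx npy];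
    case: (tpermP x y q) => [eq|eq|nqx nqy]; subst.
    all: try by rewrite ?eqxx ?ltnn in nxy lpq *.
    + by move=> _; apply: ltn_trans lzqp lzxy.
    + by rewrite lxy.
    + by rewrite (ltn_trans lxy lpq).
    + by rewrite (ltn_trans lpq lxy).
    + by move=> _; apply: ltn_trans lzxy lzqp.
apply: (@leq_ltn_trans #|Inv z' :\ (x, y)|).
  by rewrite /inv_count -/(Inv z) -(card_in_imset inj) subset_leq_card.
rewrite /inv_count -/(Inv z') [X in _ < X](cardsD1 (x, y)).
by rewrite inE /= lxy !z'E /s tpermL tpermR lzxy.
Qed.

Lemma bruhat_stepP z z' : bruhat_step z z' ->
  exists a b, [/\ a < b, z a < z b & z' = (tperm a b * z)%g].
Proof.
case/andP=> /existsP[i /existsP[j /andP[lij /eqP ->]]].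
set a := (z^-1)%g i; set b := (z^-1)%g j.
have za : z a = i by rewrite permKV.
have zb : z b = j by rewrite permKV.
rewrite -[in tperm i j]za -[in tperm _ j]zb mulg_tpermJ => linv.
case: (ltngtP a b) => [lab|lba|eab]; first by exists a, b; rewrite za zb.
- have := @inv_count_tperm (tperm a b * z) b a lba.
  rewrite !permM tpermL tpermR za zb lij mulgA tpermC tperm2 mul1g => /(_ isT).
  by rewrite tpermC in linv => h; move: (ltn_trans linv h); rewrite ltnn.
- by move: lij; rewrite -za -zb (val_inj eab) ltnn.
Qed.

Lemma bruhat_step_tperm z a b : a < b -> z a < z b ->
  bruhat_step z (tperm a b * z)%g.
Proof.
move=> lab lzab; rewrite /bruhat_step inv_count_tperm // andbT.
by apply/existsP; exists (z a); apply/existsP; exists (z b); rewrite lzab mulg_tpermJ eqxx.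
Qed.

Lemma perm_inversion z : z != 1%g -> exists x y, x < y /\ z y < z x.
Proof.
move=> nz.
have moved : exists k, [exists x, (val x == k) && (z x != x)].
  have [x zx] : exists x, z x != x.
    apply/existsP; apply: contraR nz => /existsPn fixz.
    by apply/eqP/permP=> x; rewrite perm1; apply/eqP/negPn.
  by exists (val x); apply/existsP; exists x; rewrite eqxx.
case: (ex_minnP moved) => m /existsP[x /andP[/eqP xm zx]] mmin.
have fixed t : t < x -> z t = t.
  move=> ltx; apply/eqP/negPn/negP => zt; move: ltx; rewrite ltnNge xm.
  by rewrite mmin //; apply/existsP; exists t; rewrite eqxx zt.
exists x, ((z^-1)%g x); split.
  case: (ltngtP x ((z^-1)%g x)) => [//|lt|eq].
  - by move: zx (fixed _ lt); rewrite permKV => + e; rewrite {1}e permKV eqxx.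
  - by move: zx; rewrite {1}(val_inj eq) permKV eqxx.
rewrite permKV; case: (ltngtP x (z x)) => [//|lt|eq].
- by move/perm_inj: (fixed _ lt) zx => ->; rewrite eqxx.
- by rewrite -(val_inj eq) eqxx in zx.
Qed.

Lemma bruhat_le1 z : bruhat_le 1 z.
Proof.
have [k] := ubnP (inv_count z); elim: k z => // k IH z lt_zk.
have [->|nz] := eqVneq z 1%g; first exact: connect0.
have [x [y [lxy lzyx]]] := perm_inversion nz.
set z' := (tperm x y * z)%g.
have zE : z = (tperm x y * z')%g by rewrite /z' mulgA tperm2 mul1g.
have lz' : z' x < z' y by rewrite !permM tpermL tpermR.
have := inv_count_tperm lxy lz'; rewrite -zE => lt_z'z.
apply: connect_trans (IH z' (leq_trans lt_z'z lt_zk)) (connect1 _).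
by rewrite [X in bruhat_step _ X]zE bruhat_step_tperm.
Qed.

End Inversions.

Definition split_increasing n (w : {perm 'I_n}) (p : nat) : Prop :=
  (forall x y : 'I_n, x < y -> y < p -> w x < w y) /\
  (forall x y : 'I_n, p <= x -> x < y -> w x < w y).

Lemma increasing_of_ascents n (f : 'I_n -> nat) (lo hi : nat) :
  (forall t t' : 'I_n, lo <= t -> val t' = t.+1 -> t' < hi -> f t < f t') ->
  forall x y : 'I_n, lo <= x -> x < y -> y < hi -> f x < f y.
Proof.
move=> asc x y lox + yhi; have [d] := ubnP (y - x); elim: d y yhi => // d IH y yhi.
move=> gap lxy; have y1n : y.-1 < n by rewrite (leq_ltn_trans (leq_pred _)).
set y1 := Ordinal y1n.
have yS : val y = y1.+1 by rewrite /= prednK // (leq_ltn_trans _ lxy).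
have step : f y1 < f y by apply: asc => //=; move: yS => /=; lia.
have [xy1|xy1] := eqVneq x y1; first by rewrite xy1.
by apply: ltn_trans step; apply: IH; move: xy1 yS; rewrite -val_eqE /=; lia.
Qed.

Lemma grassmannian_split n (w : {perm 'I_n}) :
  grassmannian w -> exists p, split_increasing w p.
Proof.
rewrite /grassmannian => /card_le1_eqP D1.
set D := [set p : 'I_n | _] in D1.
have asc (t t' : 'I_n) : val t' = t.+1 -> t \notin D -> w t < w t'.
  move=> tt' tD; rewrite ltn_neqAle; apply/andP; split.
    by apply/eqP=> /val_inj/perm_inj et; move: tt'; rewrite et => /eqP; rewrite ltn_eqF.
  rewrite leqNgt; apply: contra tD => lt; rewrite inE.
  by apply/existsP; exists t'; rewrite tt' eqxx lt.
have incr := @increasing_of_ascents n (fun t => nat_of_ord (w t)).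
have [d dD|noD] := pickP (mem D).
  have only_d t : t \in D -> t = d by move/(D1 _ _)/(_ dD).
  exists d.+1; split=> x y.
  - apply: (incr 0) => // t t' _ tt' t'd; apply: asc => //.
    by apply/negP=> /only_d e; move: t'd; rewrite tt' e ltnn.
  - move=> dx xy; apply: (incr _ n _ _ _ dx xy (ltn_ord y)) => t t' dt tt' _.
    by apply: asc => //; apply/negP=> /only_d e; move: dt; rewrite e ltnn.
exists n; split=> x y; last by rewrite leqNgt ltn_ord.
by apply: (incr 0) => // t t' _ tt' _; apply: asc => //; rewrite (negbT (noD t)).
Qed.

Section Box.
Variables (n : nat) (w : {perm 'I_n}) (p : nat).

Definition box_admissible (j : 'I_n) (x : nat) : bool :=
  if j < p then x <= w j else w j <= x.

Definition in_box (z : {perm 'I_n}) : bool := [forall j, box_admissible j (z j)].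

Lemma in_boxP z j : in_box z -> box_admissible j (z j).
Proof. by move/forallP. Qed.

Lemma in_box_self : in_box w.
Proof. by apply/forallP=> j; rewrite /box_admissible; case: ifP. Qed.

Hypothesis w_split : split_increasing w p.

Lemma in_box_bruhat_step (u v : {perm 'I_n}) :
  bruhat_step u v -> in_box v -> in_box u.
Proof.
case/bruhat_stepP=> a [b [lab luab ->]] bv; apply/forallP=> t.
have := in_boxP a bv; have := in_boxP b bv; have := in_boxP t bv.
rewrite /box_admissible !permM tpermL tpermR.
case: (tpermP a b t) => [->|->|nta ntb] // _ hb ha.
- case: ifP => ap; first by move: ha; rewrite ap => /(leq_trans (ltnW luab)).
  have bp : p <= b by rewrite (leq_trans _ (ltnW lab)) // leqNgt ap.
  move: hb; rewrite ltnNge bp /= => hb; apply: leq_trans hb.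
  by rewrite ltnW // w_split.2 // leqNgt ap.
- case: ifP => bp; last by move: hb; rewrite bp => /leq_trans; apply; apply: ltnW.
  move: ha; rewrite (ltn_trans lab bp) => ha; apply: leq_trans ha _.
  by rewrite ltnW // w_split.1.
Qed.

Lemma in_box_of_bruhat_le z : bruhat_le z w -> in_box z.
Proof.
case/connectP=> s; elim: s z => [|y s IH] z /=; first by move=> _ <-; exact: in_box_self.
by case/andP=> st ps ew; apply: (in_box_bruhat_step st); exact: IH.
Qed.

End Box.

Section PairwiseSums.
Local Open Scope ring_scope.
Variables (R : numDomainType) (I : finType) (c : I -> R) (A B : {set I}).
Hypotheses (AB : #|A| = #|B|) (leBA : forall x y, x \in A -> y \in B -> c y <= c x).

Lemma sum_pairwise_sub :
  \sum_(x in A) \sum_(y in B) (c x - c y) =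
  (\sum_(x in A) c x - \sum_(y in B) c y) *+ #|A|.
Proof.
rewrite (eq_bigr (fun x => c x *+ #|B| - \sum_(y in B) c y)) => [|x _].
  by rewrite sumrB sumr_const sumrMnl AB mulrnBl.
by rewrite sumrB sumr_const.
Qed.

Lemma ler_sum_pairwise : \sum_(y in B) c y <= \sum_(x in A) c x.
Proof.
have [A0|Apos] := posnP #|A|.
  have /eqP-> : A == set0 by rewrite -cards_eq0 A0.
  have /eqP-> : B == set0 by rewrite -cards_eq0 -AB A0.
  by rewrite !big_set0.
rewrite -subr_ge0 -(pmulrn_lge0 _ Apos) -sum_pairwise_sub.
by apply: sumr_ge0 => x xA; apply: sumr_ge0 => y yB; rewrite subr_ge0 leBA.
Qed.

Lemma eq_sum_pairwise : \sum_(y in B) c y = \sum_(x in A) c x ->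
  forall x y, x \in A -> y \in B -> c x = c y.
Proof.
move=> E x y xA yB; apply/eqP; rewrite -subr_eq0; apply/eqP.
have ge0 x' y' : x' \in A -> y' \in B -> 0 <= c x' - c y'.
  by move=> xA' yB'; rewrite subr_ge0 leBA.
have all0 : \sum_(x in A) \sum_(y in B) (c x - c y) = 0.
  by rewrite sum_pairwise_sub E subrr mul0rn.
have row0 : \sum_(y' in B) (c x - c y') = 0.
  by apply: (psumr_eq0P _ all0 xA) => x' xA'; apply: sumr_ge0 => y' yB'; apply: ge0.
by apply: (psumr_eq0P _ row0 yB) => y' yB'; apply: ge0.
Qed.

End PairwiseSums.

Lemma sum_ord_ltn (N m : nat) : \sum_(k < N) (k < m : nat) = minn m N.
Proof.
elim: N => [|N IH]; first by rewrite big_ord0 minn0.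
by rewrite big_ord_recr /= IH; case: (leqP m N) => h; lia.
Qed.

Lemma perm_neq_at n (z z' : {perm 'I_n}) : z != z' -> exists t, z t != z' t.
Proof.
move=> nzz'; apply/existsP; apply: contraR nzz' => /existsPn agree.
by apply/eqP/permP=> t; apply/eqP/negPn; exact: agree.
Qed.

Section Levels.
Variables (n : nat) (w : {perm 'I_n}) (p : nat) (R : realFieldType).
Local Open Scope ring_scope.
Implicit Types (c : 'I_n -> R) (u z : {perm 'I_n}) (k j t x y : 'I_n).

Definition weight c z : R := \sum_j c j * (z j)%:R.

Lemma weight_tperm c u x y :
  weight c (tperm x y * u)%g = weight c u + (c x - c y) * ((u y)%:R - (u x)%:R).
Proof.
have [<-|nxy] := eqVneq x y; first by rewrite tperm1 mul1g subrr mul0r addr0.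
have split_xy (G : 'I_n -> R) :
    \sum_t G t = G x + G y + \sum_(t | (t != x) && (t != y)) G t.
  by rewrite (bigD1 x) //= (bigD1 y) /= ?addrA // eq_sym.
rewrite /weight !split_xy !permM tpermL tpermR.
rewrite (eq_bigr (fun t => c t * (u t)%:R)) => [|t /andP[tx ty]]; first by ring.
by rewrite permM tpermD // eq_sym.
Qed.

(* As [z j] counts the levels [k < z j], [weight c z] is the sum over [k] of
   the weights of the positions whose value exceeds [k]. *)
Definition level_weight c k z : R := \sum_j c j * ((k < z j)%N : nat)%:R.

Lemma weight_levels c z : weight c z = \sum_k level_weight c k z.
Proof.
rewrite /weight /level_weight exchange_big; apply: eq_bigr => j _.
by rewrite -mulr_sumr -natr_sum sum_ord_ltn (minn_idPl (ltnW (ltn_ord _))).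
Qed.

Definition lowered u z k := [set j | (z j <= k < u j)%N].
Definition raised u z k := [set j | (u j <= k < z j)%N].

Lemma level_weight_sub c u z k : level_weight c k z - level_weight c k u =
  \sum_(j in raised u z k) c j - \sum_(j in lowered u z k) c j.
Proof.
rewrite /level_weight -sumrB [in RHS]big_mkcond [X in _ = _ - X]big_mkcond -sumrB.
apply: eq_bigr => j _; rewrite !inE !ltnNge.
by case: (z j <= k)%N; case: (u j <= k)%N; rewrite /= ?mulr1 ?mulr0 ?subrr ?subr0 ?sub0r.
Qed.

Lemma card_lowered u z k : #|lowered u z k| = #|raised u z k|.
Proof.
pose above (s : {perm 'I_n}) := [set j | (k < s j)%N].
have card_above s : #|above s| = #|[set v : 'I_n | (k < v)%N]|.
  have -> : above s = s @^-1: [set v : 'I_n | (k < v)%N] by apply/setP=> j; rewrite !inE.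
  exact/card_preimset/perm_inj.
have -> : lowered u z k = above u :\: above z.
  by apply/setP=> j; rewrite !inE -leqNgt andbC.
have -> : raised u z k = above z :\: above u.
  by apply/setP=> j; rewrite !inE -leqNgt andbC.
have := cardsID (above z) (above u); have := cardsID (above u) (above z).
by rewrite setIC !card_above; lia.
Qed.

Lemma lowered_raised_at u z t : z t != u t ->
  exists k x y, [/\ x \in lowered u z k, y \in raised u z k & x = t \/ y = t].
Proof.
move=> zut; have [lt|lt|/val_inj eq] := ltngtP (z t) (u t); last by rewrite eq eqxx in zut.
- have tA : t \in lowered u z (z t) by rewrite inE leqnn lt.
  have /set0Pn[y yB] : raised u z (z t) != set0.
    by rewrite -card_gt0 -card_lowered card_gt0; apply/set0Pn; exists t.
  by exists (z t), t, y; split => //; left.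
- have tB : t \in raised u z (u t) by rewrite inE leqnn lt.
  have /set0Pn[x xA] : lowered u z (u t) != set0.
    by rewrite -card_gt0 card_lowered card_gt0; apply/set0Pn; exists t.
  by exists (u t), x, t; split => //; right.
Qed.

(* At position [j] the box admits values both [<= k] and [> k]. *)
Definition crossable j (k : nat) : bool := if (j < p)%N then (k < w j)%N else (w j <= k)%N.

(* Pairs of positions whose values [u] could exchange across a common level
   inside the box: [u] maximises [weight c] on the box as soon as [c y <= c x]
   on all of them. *)
Definition conflict u x y : bool :=
  [exists k : 'I_n, [&& (u y <= k < u x)%N, crossable x k & crossable y k]].

Lemma conflictP u x y : reflect
  (exists k : nat, [/\ (u y <= k < u x)%N, crossable x k & crossable y k])
  (conflict u x y).
Proof.
apply: (iffP existsP) => [[k /and3P[kb cx cy]]|[k [kb cx cy]]]; first by exists k.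
have kn : (k < n)%N by case/andP: kb => _ /ltn_trans; apply.
by exists (Ordinal kn); rewrite kb cx cy.
Qed.

Lemma conflict_lt u x y : conflict u x y -> (u y < u x)%N.
Proof. by case/conflictP=> k [/andP[yk kx] _ _]; apply: leq_ltn_trans kx. Qed.

Lemma conflict_lowered_raised u z k x y : in_box w p u -> in_box w p z ->
  x \in lowered u z k -> y \in raised u z k -> conflict u x y.
Proof.
move=> bu bz; rewrite !inE => /andP[zx ux] /andP[uy zy]; apply/conflictP; exists k.
rewrite uy ux; split=> //; rewrite /crossable.
- by move: (in_boxP x bu) (in_boxP x bz); rewrite /box_admissible; case: (x < p)%N; lia.
- by move: (in_boxP y bu) (in_boxP y bz); rewrite /box_admissible; case: (y < p)%N; lia.
Qed.

Section Dominant.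
Variables (c : 'I_n -> R) (u z : {perm 'I_n}).
Hypotheses (bu : in_box w p u) (bz : in_box w p z).
Hypothesis dominant : forall x y, conflict u x y -> c y <= c x.

Lemma level_weight_le k : level_weight c k z <= level_weight c k u.
Proof.
rewrite -subr_le0 level_weight_sub subr_le0; apply: ler_sum_pairwise.
  exact: card_lowered.
by move=> x y xA yB; apply/dominant/(conflict_lowered_raised bu bz xA yB).
Qed.

Lemma weight_le_dominant : weight c z <= weight c u.
Proof. by rewrite !weight_levels ler_sum // => k _; apply: level_weight_le. Qed.

Lemma weight_eq_dominant : weight c z = weight c u -> forall t, z t != u t ->
  exists x y, [/\ conflict u x y, c x = c y & x = t \/ y = t].
Proof.
move=> E t /lowered_raised_at[k [x [y [xA yB xyt]]]].
have cxy := conflict_lowered_raised bu bz xA yB.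
exists x, y; split => //; apply: (eq_sum_pairwise (card_lowered u z k)) xA yB.
  by move=> x' y' xA' yB'; apply/dominant/(conflict_lowered_raised bu bz xA' yB').
apply/eqP; rewrite -subr_eq0 -level_weight_sub; apply/eqP.
have gap0 : \sum_k' (level_weight c k' u - level_weight c k' z) = 0.
  by rewrite sumrB -!weight_levels E subrr.
have /(_ k isT) : forall k', true -> level_weight c k' u - level_weight c k' z = 0.
  by apply: psumr_eq0P gap0 => k' _; rewrite subr_ge0 level_weight_le.
by move/eqP; rewrite subr_eq0 eq_sym => /eqP->; rewrite subrr.
Qed.

End Dominant.

Lemma weight_lt_strict c u z : in_box w p u -> in_box w p z ->
  (forall x y, conflict u x y -> c y < c x) -> z != u -> weight c z < weight c u.
Proof.
move=> bu bz strict nzu.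
have dom x y : conflict u x y -> c y <= c x by move/strict/ltW.
rewrite lt_neqAle weight_le_dominant // andbT; apply/eqP => E.
have [t /(weight_eq_dominant bu bz dom E)[x [y [/strict]]]] := perm_neq_at nzu.
by move=> lt_yx exy _; move: lt_yx; rewrite exy ltxx.
Qed.

Lemma weight_le_exception c u z a b : in_box w p u -> in_box w p z -> c a = c b ->
  (forall x y, conflict u x y -> c y < c x \/ x = b /\ y = a) ->
  weight c z <= weight c u /\
  (weight c z = weight c u -> forall t, t != a -> t != b -> z t = u t).
Proof.
move=> bu bz cab strict.
have dom x y : conflict u x y -> c y <= c x.
  by move/strict=> [/ltW //|[-> ->]]; rewrite cab.
split=> [|E t ta tb]; first exact: weight_le_dominant.
apply/eqP/negPn/negP => /(weight_eq_dominant bu bz dom E)[x [y [/strict]]].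
case=> [lt_yx exy _|[-> -> _]]; first by move: lt_yx; rewrite exy ltxx.
by case=> e; [move: tb | move: ta]; rewrite -e eqxx.
Qed.

End Levels.

Section Descent.
Local Open Scope ring_scope.
Variables (n : nat) (w : {perm 'I_n}) (p : nat) (R : realFieldType) (c : 'I_n -> R).
Implicit Types (u : {perm 'I_n}) (j t x y : 'I_n).

Lemma crossable_between j (a b k : nat) : box_admissible w p j a ->
  box_admissible w p j b -> (a <= k < b)%N -> crossable w p j k.
Proof. by rewrite /box_admissible /crossable; case: ifP => _; lia. Qed.

Lemma crossable_near j (a k : nat) : box_admissible w p j a -> (w j != a :> nat) ->
  (a.-1 <= k <= a)%N -> crossable w p j k.
Proof. by rewrite /box_admissible /crossable; case: ifP => _; lia. Qed.

Lemma in_box_tperm u x y : in_box w p u ->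
  box_admissible w p x (u y) -> box_admissible w p y (u x) -> in_box w p (tperm x y * u)%g.
Proof.
move=> bu ax ay; apply/forallP=> t; rewrite permM.
by case: tpermP => [->|->|_ _] //; apply: in_boxP.
Qed.

(* The value of [w] at the endpoint whose move leaves the box sits at a
   position [t] strictly between, which can cross the relevant levels. *)
Lemma blocking_position u j j' : in_box w p u -> conflict w p u j j' ->
  ~~ (box_admissible w p j (u j') && box_admissible w p j' (u j)) ->
  exists t, [/\ (u j' < u t < u j)%N, crossable w p j (u t),
                crossable w p j' (u t).-1 & (w t != u t :> nat)].
Proof.
move=> bu cjj'; have adm t : box_admissible w p t (u t) by apply: in_boxP.
have [k [/andP[j'k kj] cjk cj'k]] := conflictP _ _ _ _ _ cjj'.
have moved t s : u t = w s :> nat -> u t != u s :> nat -> (w t != w s :> nat).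
  move=> uts; apply: contraNneq => wts.
  by rewrite (perm_inj (val_inj (wts : w t = w s :> nat))).
case Aj: (box_admissible w p j (u j')) => /=; last first.
  move=> _; have jp : (p <= j)%N.
    rewrite leqNgt; apply/negP=> jp.
    by move: Aj (adm j) => /negbT; rewrite /box_admissible jp; lia.
  have /negbTE jp' : ~~ (j < p)%N by rewrite -leqNgt.
  have lt_j'wj : (u j' < w j)%N by move/negbT: Aj; rewrite /box_admissible jp' -ltnNge.
  have wjk : (w j <= k)%N by move: cjk; rewrite /crossable jp'.
  set t := (u^-1)%g (w j); have ut : u t = w j :> nat by rewrite permKV.
  exists t; split; rewrite ?ut.
  - by apply/andP; split; lia.
  - by rewrite /crossable jp'.
  - by move: cj'k (adm j'); rewrite /crossable /box_admissible; case: (j' < p)%N; lia.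
  - by apply: (moved t j ut); rewrite ut; lia.
move=> nAj'; have j'p : (j' < p)%N.
  rewrite ltnNge; apply/negP=> pj'.
  by move: nAj' (adm j'); rewrite /box_admissible ltnNge pj' /=; lia.
have lt_wj'j : (w j' < u j)%N by move: nAj'; rewrite /box_admissible j'p -ltnNge.
have kwj' : (k < w j')%N by move: cj'k; rewrite /crossable j'p.
set t := (u^-1)%g (w j'); have ut : u t = w j' :> nat by rewrite permKV.
exists t; split; rewrite ?ut.
- by apply/andP; split; lia.
- by move: cjk (adm j); rewrite /crossable /box_admissible; case: (j < p)%N; lia.
- by rewrite /crossable j'p; lia.
- by apply: (moved t j' ut); rewrite ut; lia.
Qed.

(* Either the swap of [j] and [j'] stays in the box, or [(j, t)] or [(t, j')]
   is a violated pair with a smaller gap, for the blocking position [t]. *)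
Lemma descent u j j' : in_box w p u -> conflict w p u j j' -> c j <= c j' ->
  exists x y, [/\ (u y < u x)%N, c x <= c y, (u j' <= u y)%N, (u x <= u j)%N
                & in_box w p (tperm x y * u)%g].
Proof.
move=> bu; have [d] := ubnP (u j - u j')%N; elim: d j j' => // d IH j j' gap cjj' cle.
have [ok|blocked] := boolP (box_admissible w p j (u j') && box_admissible w p j' (u j)).
  exists j, j'; rewrite !leqnn (conflict_lt cjj'); split=> //.
  by case/andP: ok; apply: in_box_tperm.
have [t [/andP[lo hi] cjt cj't wt]] := blocking_position bu cjj' blocked.
have ct k : ((u t).-1 <= k <= u t)%N -> crossable w p t k.
  by apply: crossable_near wt; apply: in_boxP.
have [le_jt|lt_tj] := leP (c j) (c t).
  have ctj : conflict w p u j t.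
    by apply/conflictP; exists (u t); rewrite leqnn hi ct ?leqnn ?leq_pred.
  have [x [y [? ? le_ty ? ?]]] := IH j t ltac:(lia) ctj le_jt.
  by exists x, y; split=> //; apply: leq_trans le_ty; apply: ltnW.
have ctj' : conflict w p u t j'.
  by apply/conflictP; exists (u t).-1; rewrite ct ?leqnn ?leq_pred //; split=> //; lia.
have [x [y [? ? ? le_xt ?]]] := IH t j' ltac:(lia) ctj' (le_trans (ltW lt_tj) cle).
by exists x, y; split=> //; apply: leq_trans le_xt (ltnW hi).
Qed.

Lemma strict_or_improving_swap u : in_box w p u ->
  (forall x y, conflict w p u x y -> c y < c x) \/
  exists x y, [/\ (u y < u x)%N, c x <= c y & in_box w p (tperm x y * u)%g].
Proof.
move=> bu; have [/existsP[j /existsP[j' /andP[cjj' le_jj']]]|none] :=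
  boolP [exists j, exists j', conflict w p u j j' && (c j <= c j')].
  by right; have [x [y [? ? _ _ ?]]] := descent bu cjj' le_jj'; exists x, y.
left=> x y cxy; rewrite ltNge; apply: contra none => le_xy.
by apply/existsP; exists x; apply/existsP; exists y; rewrite cxy.
Qed.

End Descent.

Section BruhatBox.
Variables (n : nat) (w : {perm 'I_n}) (p : nat).

Lemma conflict_self x y : conflict w p w x y -> (x < p <= y)%N.
Proof.
case/conflictP=> k [/andP[yk kx]]; rewrite /crossable.
by case: (ltnP x p) => xp; case: (ltnP y p) => yp /=; lia.
Qed.

(* Going up along swaps that stay in the box; at a box permutation without
   such a swap, the weight [- t] is maximised both by it and by [w]. *)
Lemma bruhat_le_of_in_box z : in_box w p z -> bruhat_le z w.
Proof.
pose c (t : 'I_n) : rat := (- (t : nat)%:R)%R.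
have c_lt x y : (c y < c x)%R = (x < y)%N by rewrite ltrN2 ltr_nat.
have bw := in_box_self w p.
have [k] := ubnP (n * n - inv_count z)%N; elim: k z => // k IH z lt_k bz.
have [->|nzw] := eqVneq z w; first exact: connect0.
case: (strict_or_improving_swap c bz) => [strict|[x [y [lt_zyx le_cxy bz']]]].
  have w_strict x y : conflict w p w x y -> (c y < c x)%R.
    by move/conflict_self; rewrite c_lt => /andP[xp py]; apply: leq_trans py.
  have nwz : w != z by rewrite eq_sym.
  have := lt_trans (weight_lt_strict bw bz w_strict nzw) (weight_lt_strict bz bw strict nwz).
  by rewrite ltxx.
have lyx : (y < x)%N.
  move: le_cxy lt_zyx; rewrite lerN2 ler_nat leq_eqVlt => /orP[/eqP/val_inj->|//].
  by rewrite ltnn.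
set z' := (tperm x y * z)%g.
have st : bruhat_step z z' by rewrite /z' tpermC bruhat_step_tperm.
apply: connect_trans (connect1 st) (IH z' _ bz').
by have := inv_count_le z'; case/andP: st => _; lia.
Qed.

Lemma bruhat_interval_box z : split_increasing w p ->
  (bruhat_le 1 z && bruhat_le z w) = in_box w p z.
Proof.
move=> w_split; apply/idP/idP => [/andP[_]|bz].
  exact: in_box_of_bruhat_le.
by rewrite bruhat_le1 bruhat_le_of_in_box.
Qed.

End BruhatBox.

Section Segments.
Local Open Scope ring_scope.
Variables (R : realFieldType) (n : nat).
Implicit Types (S : seq 'rV[R]_n) (a b c x : 'rV[R]_n).

Lemma dotvDZ c x y (s t : R) : dotv c (s *: x + t *: y) = s * dotv c x + t * dotv c y.
Proof.
by rewrite /dotv !mulr_sumr -big_split /=; apply: eq_bigr => j _; rewrite !mxE; ring.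
Qed.

Lemma dotv_sum c S (lam : 'I_(size S) -> R) :
  dotv c (\sum_k lam k *: S`_k) = \sum_k lam k * dotv c S`_k.
Proof.
rewrite /dotv (eq_bigr (fun i => \sum_k c 0 i * (lam k * S`_k 0 i))) => [|i _].
  rewrite exchange_big; apply: eq_bigr => k _; rewrite mulr_sumr.
  by apply: eq_bigr => i _; rewrite mulrCA.
by rewrite summxE mulr_sumr; apply: eq_bigr => k _; rewrite mxE.
Qed.

Lemma conv_le c S x M : conv S x ->
  (forall k : 'I_(size S), dotv c S`_k <= M) -> dotv c x <= M.
Proof.
case=> lam [lam0 [lam1 ->]] le_M; rewrite dotv_sum.
rewrite -[M]mul1r -lam1 mulr_suml; apply: ler_sum => k _.
exact: ler_wpM2l.
Qed.

Lemma conv_nth S (k0 : 'I_(size S)) : conv S S`_k0.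
Proof.
exists (fun k => (k == k0)%:R); split=> [k|]; first by rewrite ler0n.
split; first by rewrite (bigD1 k0) //= eqxx big1 ?addr0 // => k /negbTE->.
rewrite (bigD1 k0) //= eqxx scale1r big1 ?addr0 // => k /negbTE->.
by rewrite scale0r.
Qed.

Lemma conv_pair S (ia ib : 'I_(size S)) (l0 l1 : R) :
  0 <= l0 -> 0 <= l1 -> l0 + l1 = 1 -> conv S (l0 *: S`_ia + l1 *: S`_ib).
Proof.
move=> l0_ge0 l1_ge0 l01.
pose lam k := (if k == ia then l0 else 0) + (if k == ib then l1 else 0).
exists lam; split=> [k|]; first by apply: addr_ge0; case: ifP.
split; first by rewrite big_split -!big_mkcond /= !big_pred1_eq.
rewrite (eq_bigr (fun k => (if k == ia then l0 *: S`_ia else 0) +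
                          (if k == ib then l1 *: S`_ib else 0))) => [|k _].
  by rewrite big_split -!big_mkcond /= !big_pred1_eq.
by rewrite scalerDl; congr (_ + _); case: eqP => [->|_]; rewrite ?scale0r.
Qed.

Lemma conv2P a b x : conv [:: a; b] x <->
  exists l0 l1 : R, [/\ 0 <= l0, 0 <= l1, l0 + l1 = 1 & x = l0 *: a + l1 *: b].
Proof.
split=> [[lam [lam0 [lam1 ->]]]|[l0 [l1 [? ? l01 ->]]]].
  exists (lam ord0), (lam (lift ord0 ord0)).
  by move: lam1; rewrite !big_ord_recl !big_ord0 !addr0.
exact: (@conv_pair [:: a; b] ord0 (lift ord0 ord0)).
Qed.

Lemma conv2_l a b : conv [:: a; b] a.
Proof. by apply/conv2P; exists 1, 0; rewrite scale1r scale0r addr0 ler01 lexx addr0. Qed.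

Lemma conv2_r a b : conv [:: a; b] b.
Proof. by apply/conv2P; exists 0, 1; rewrite scale1r scale0r add0r ler01 lexx add0r. Qed.

Lemma edge_support S a b c : (forall x, face S c x <-> conv [:: a; b] x) ->
  [/\ conv S a, conv S b, forall y, conv S y -> dotv c y <= dotv c a,
      dotv c b = dotv c a &
      forall y, conv S y -> dotv c y = dotv c a -> conv [:: a; b] y].
Proof.
move=> faceE; have [Sa max_a] := (faceE a).2 (conv2_l a b).
have [Sb max_b] := (faceE b).2 (conv2_r a b).
split=> // [|y Sy ya]; first by apply/le_anti; rewrite max_a // max_b.
by apply/faceE; split=> // y' Sy'; rewrite ya max_a.
Qed.

Lemma face_segment S c (ia ib : 'I_(size S)) : S`_ia != S`_ib ->
  (forall k : 'I_(size S), dotv c S`_k <= dotv c S`_ia) -> dotv c S`_ib = dotv c S`_ia ->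
  (forall k : 'I_(size S), dotv c S`_k = dotv c S`_ia -> S`_k = S`_ia \/ S`_k = S`_ib) ->
  forall x, face S c x <-> conv [:: S`_ia; S`_ib] x.
Proof.
set a := S`_ia; set b := S`_ib; set M := dotv c a => nab le_M bM onM x.
split=> [[[lam [lam0 [lam1 xE]]] max_x]|/conv2P[l0 [l1 [l0_ge0 l1_ge0 l01 ->]]]]; last first.
  split; first exact: conv_pair.
  by move=> y Sy; rewrite dotvDZ bM -mulrDl l01 mul1r; apply: conv_le Sy le_M.
have gap_ge0 k : 0 <= lam k * (M - dotv c S`_k) by rewrite mulr_ge0 ?subr_ge0.
have gap0 : \sum_k lam k * (M - dotv c S`_k) = 0.
  apply/le_anti; rewrite sumr_ge0 // andbT.
  under eq_bigr do rewrite mulrBr mulrC.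
  by rewrite sumrB -mulr_sumr lam1 mulr1 -dotv_sum -xE subr_le0 max_x //; apply: conv_nth.
have lam_gap0 k : lam k * (M - dotv c S`_k) = 0.
  by apply: (psumr_eq0P _ gap0) => // k' _; apply: gap_ge0.
have lamE k : lam k = (if S`_k == a then lam k else 0) + (if S`_k == b then lam k else 0).
  have [->|nz] := eqVneq (lam k) 0; first by rewrite !if_same addr0.
  have /onM[->|->] : dotv c S`_k = M.
    by move/eqP: (lam_gap0 k); rewrite mulf_eq0 (negbTE nz) subr_eq0 eq_sym => /eqP.
  - by rewrite eqxx (negbTE nab) addr0.
  - by rewrite eqxx eq_sym (negbTE nab) add0r.
set l0 := \sum_(k < size S) (if S`_k == a then lam k else 0).
set l1 := \sum_(k < size S) (if S`_k == b then lam k else 0).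
apply/conv2P; exists l0, l1; split.
- by apply: sumr_ge0 => k _; case: ifP.
- by apply: sumr_ge0 => k _; case: ifP.
- by rewrite -big_split -lam1; apply: eq_bigr => k _; exact/esym/lamE.
rewrite xE !scaler_suml -big_split; apply: eq_bigr => k _.
by rewrite {1}lamE scalerDl; congr (_ + _); case: eqP => [->|]; rewrite ?scale0r.
Qed.

End Segments.

Section PermPoints.
Local Open Scope ring_scope.
Variables (R : realFieldType) (n : nat).
Implicit Types (c : 'rV[R]_n) (u v z : {perm 'I_n}).

Lemma dotv_perm_pt c z : dotv c (perm_pt R z) = weight (fun t => c 0 t) z + \sum_t c 0 t.
Proof.
rewrite /dotv /weight -big_split; apply: eq_bigr => t _.
by rewrite mxE -[(z t).+1]addn1 natrD mulrDr mulr1.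
Qed.

Lemma perm_pt_inj : injective (@perm_pt R n).
Proof.
move=> z z' /(congr1 (fun M : 'rV[R]_n => M 0)) E; apply/permP => t.
by apply/val_inj/eqP; move: (congr1 (@^~ t) E); rewrite !mxE => /eqP; rewrite eqr_nat.
Qed.

(* All permutation points lie on one sphere around the origin, so none of them
   lies strictly between two others. *)
Lemma perm_pt_segment z u v (l0 l1 : R) : u != v -> 0 <= l0 -> 0 <= l1 -> l0 + l1 = 1 ->
  perm_pt R z = l0 *: perm_pt R u + l1 *: perm_pt R v -> z = u \/ z = v.
Proof.
move=> nuv l0_ge0 l1_ge0 l01 E.
pose P (s : {perm 'I_n}) t : R := ((s t).+1)%:R.
have zE t : P z t = l0 * P u t + l1 * P v t.
  by have := congr1 (fun M : 'rV[R]_n => M 0 t) E; rewrite !mxE.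
have sphere s : \sum_t P s t ^+ 2 = \sum_(t : 'I_n) ((t : nat).+1)%:R ^+ 2.
  by rewrite [RHS](reindex_inj (@perm_inj _ s)).
have l1E : l1 = 1 - l0 by lra.
have dist0 : l0 * l1 * \sum_t (P u t - P v t) ^+ 2 = 0.
  have -> : l0 * l1 * \sum_t (P u t - P v t) ^+ 2 =
            - \sum_t (P z t ^+ 2 - l0 * P u t ^+ 2 - l1 * P v t ^+ 2).
    by rewrite mulr_sumr -sumrN; apply: eq_bigr => t _; rewrite zE l1E; ring.
  by rewrite !sumrB -!mulr_sumr !sphere l1E; ring.
have [t ht] := perm_neq_at nuv.
have dist_gt0 : 0 < \sum_t (P u t - P v t) ^+ 2.
  rewrite (bigD1 t) //= ltr_pwDl ?sumr_ge0 // => [|s _]; last exact: sqr_ge0.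
  rewrite lt_def sqr_ge0 sqrf_eq0 subr_eq0 /P eqr_nat eqSS andbT.
  by apply: contra ht => /eqP/val_inj->.
move/eqP: dist0; rewrite !mulf_eq0 (gt_eqF dist_gt0) orbF => /orP[]/eqP l_eq0.
  right; apply: perm_pt_inj; rewrite E; move: l01; rewrite l_eq0 add0r => ->.
  by rewrite scale0r add0r scale1r.
left; apply: perm_pt_inj; rewrite E; move: l01; rewrite l_eq0 addr0 => ->.
by rewrite scale0r addr0 scale1r.
Qed.

End PermPoints.

Lemma perm_agree_off2 n (u z : {perm 'I_n}) (a b : 'I_n) : a != b ->
  (forall t, t != a -> t != b -> z t = u t) -> z = u \/ z = (tperm a b * u)%g.
Proof.
move=> nab agree.
have img t : (t == a) || (t == b) -> z t = u a \/ z t = u b.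
  move=> tab; set s := (u^-1)%g (z t); have us : u s = z t by rewrite permKV.
  have [<-|sa] := eqVneq s a; first by left.
  have [<-|sb] := eqVneq s b; first by right.
  by move: tab; rewrite -(perm_inj (etrans (agree s sa sb) us)) (negbTE sa) (negbTE sb).
have zba : z b != z a by rewrite (inj_eq perm_inj) eq_sym.
have [za|za] := img a ltac:(by rewrite eqxx).
  have zb : z b = u b.
    by case: (img b ltac:(by rewrite eqxx orbT)) => // zb; rewrite zb za eqxx in zba.
  left; apply/permP => t; have [->|ta] := eqVneq t a => //.
  by have [->|tb] := eqVneq t b; last exact: agree.
have zb : z b = u a.
  by case: (img b ltac:(by rewrite eqxx orbT)) => // zb; rewrite zb za eqxx in zba.
right; apply/permP => t; rewrite permM.
by case: tpermP => [->|->|ta tb] //; apply: agree; apply/eqP.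
Qed.

Section BipPoints.
Local Open Scope ring_scope.
Variables (R : realFieldType) (n : nat) (w : {perm 'I_n}) (p : nat).
Hypothesis w_split : split_increasing w p.

Lemma bip_points_nth (k : 'I_(size (bip_points R 1%g w))) :
  exists z, in_box w p z /\ (bip_points R 1%g w)`_k = perm_pt R z.
Proof.
have /mapP[z] : (bip_points R 1%g w)`_k \in bip_points R 1%g w by apply: mem_nth.
by rewrite mem_enum inE (bruhat_interval_box (p := p)) // => bz ->; exists z.
Qed.

Lemma bip_points_index z : in_box w p z ->
  exists k : 'I_(size (bip_points R 1%g w)), (bip_points R 1%g w)`_k = perm_pt R z.
Proof.
move=> bz; have zS : perm_pt R z \in bip_points R 1%g w.
  by apply: map_f; rewrite mem_enum inE (bruhat_interval_box (p := p)).
by exists (Ordinal (etrans (index_mem _ _) zS)); rewrite /= nth_index.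
Qed.

End BipPoints.

Definition frozen_transposition n (w u v : {perm 'I_n}) : Prop :=
  exists i l : 'I_n, (i < l)%N /\ (forall x, v x = tperm i l (u x)) /\
    forall m : 'I_n, (i < m)%N -> (m < l)%N ->
      (u^-1)%g m = (w^-1)%g m /\ (v^-1)%g m = (w^-1)%g m.

Section EdgeForward.
Local Open Scope ring_scope.
Variables (n : nat) (w : {perm 'I_n}) (p : nat) (R : realFieldType) (c : 'I_n -> R).
Variables (u v : {perm 'I_n}).
Hypotheses (bu : in_box w p u) (bv : in_box w p v) (nuv : u != v)
  (Euv : weight c u = weight c v)
  (u_max : forall z, in_box w p z -> weight c z <= weight c u)
  (u_v_only : forall z, in_box w p z -> weight c z = weight c u -> z = u \/ z = v).

Lemma improving_swap_eq (x y : 'I_n) : (u y < u x)%N -> c x <= c y ->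
  in_box w p (tperm x y * u)%g -> (tperm x y * u)%g = v.
Proof.
move=> lt_yx le_xy bs.
have ge : weight c u <= weight c (tperm x y * u)%g.
  by rewrite weight_tperm lerDl mulr_le0 // subr_le0 // ler_nat ltnW.
have E : weight c (tperm x y * u)%g = weight c u by apply/le_anti; rewrite ge u_max.
case: (u_v_only bs E) => // e.
move: (congr1 (fun s : {perm 'I_n} => s x) e); rewrite permM tpermL => /perm_inj eyx.
by move: lt_yx; rewrite eyx ltnn.
Qed.

Lemma edge_is_swap : exists x y : 'I_n, (u y < u x)%N /\ v = (tperm x y * u)%g.
Proof.
case: (strict_or_improving_swap c bu) => [strict|[x [y [lt_yx le_xy bs]]]].
  have nvu : v != u by rewrite eq_sym.
  by move: (weight_lt_strict bu bv strict nvu); rewrite Euv ltxx.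
by exists x, y; rewrite improving_swap_eq.
Qed.

Lemma improving_swap_support (x y x' y' : 'I_n) : v = (tperm x y * u)%g ->
  (u y' < u x')%N -> c x' <= c y' -> in_box w p (tperm x' y' * u)%g ->
  (x' = x \/ x' = y) /\ (y' = x \/ y' = y).
Proof.
move=> ev lt' le' bs; have e := improving_swap_eq lt' le' bs; rewrite ev in e.
split.
- move: (congr1 (fun s : {perm 'I_n} => s x') e); rewrite !permM tpermL.
  case: tpermP => [->|->|_ _]; [by left|by right|].
  by move/perm_inj => e'; move: lt'; rewrite e' ltnn.
- move: (congr1 (fun s : {perm 'I_n} => s y') e); rewrite !permM tpermR.
  case: tpermP => [->|->|_ _]; [by left|by right|].
  by move/perm_inj => e'; move: lt'; rewrite e' ltnn.
Qed.

Lemma edge_swap_frozen (x y : 'I_n) : (u y < u x)%N -> v = (tperm x y * u)%g ->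
  forall m : 'I_n, (u y < m < u x)%N -> w ((u^-1)%g m) = m.
Proof.
move=> lt_yx ev m /andP[ym mx].
set P := (u^-1)%g m; have uP : u P = m :> nat by rewrite permKV.
have cxy : c x = c y.
  have /eqP : (c x - c y) * ((u y)%:R - (u x)%:R) = 0.
    by apply: (addrI (weight c u)); rewrite addr0 -weight_tperm -ev.
  by rewrite mulf_eq0 !subr_eq0 eqr_nat ltn_eqF // orbF => /eqP.
have := in_boxP P bu; have := in_boxP y bv; have := in_boxP y bu.
have := in_boxP x bv; have := in_boxP x bu.
rewrite ev !permM tpermL tpermR uP => ax ax' ay ay' aP.
(* If [w] does not put [m] at [P], then [P] can cross the levels [m.-1] and
   [m], so [(P, y)] or [(x, P)] is a violated pair, and the descent yields an
   improving swap other than that of [x] and [y]. *)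
apply/val_inj/eqP/negPn/negP => /= wPm.
have cP k : (m.-1 <= k <= m)%N -> crossable w p P k.
  by rewrite -{1 2}uP; apply: crossable_near; rewrite ?uP.
have [le_Py|lt_yP] := leP (c P) (c y).
  have cPy : conflict w p u P y.
    apply/conflictP; exists m.-1; rewrite uP cP ?leqnn ?leq_pred //.
    by split=> //; [|apply: (crossable_between ay ay')]; clear -ym mx; lia.
  have [x' [y' [lt' le' y_y' x'_P bs]]] := descent bu cPy le_Py.
  have [[ex|ex] _] := improving_swap_support ev lt' le' bs;
    by move: x'_P lt' y_y'; rewrite ex uP; clear -ym mx; lia.
have cxP : conflict w p u x P.
  apply/conflictP; exists m; rewrite uP cP ?leqnn ?leq_pred //.
  by split=> //; apply: (crossable_between ax' ax); clear -ym mx; lia.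
have le_xP : c x <= c P by rewrite cxy ltW.
have [x' [y' [lt' le' P_y' x'_x bs]]] := descent bu cxP le_xP.
have [_ [ey|ey]] := improving_swap_support ev lt' le' bs;
  by move: P_y' lt' x'_x; rewrite ey uP; clear -ym mx; lia.
Qed.

End EdgeForward.

Section EdgeBackward.
Local Open Scope ring_scope.
Variables (n : nat) (w : {perm 'I_n}) (p : nat) (R : realFieldType).
Variables (u v : {perm 'I_n}) (i l : 'I_n).
Hypotheses (bu : in_box w p u) (il : (i < l)%N) (vE : forall t, v t = tperm i l (u t))
  (frozen : forall m : 'I_n, (i < m)%N -> (m < l)%N -> w ((u^-1)%g m) = m).

(* Increasing in the value [u t], doubled so that the common weight [i + l] of
   the two swapped positions lies strictly between its neighbours; a frozen
   value can only be moved up from before [p] and down from after [p]. *)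
Definition edge_weight (t : 'I_n) : R :=
  if (i < u t < l)%N then (if (t < p)%N then (2 * n)%:R else - (2 * n)%:R)
  else if ((u t : nat) == i) || ((u t : nat) == l) then (i + l)%:R
  else (2 * u t)%:R.

Lemma frozen_at t : (i < u t < l)%N -> w t = u t :> nat.
Proof. by case/andP=> it tl; rewrite -{1}(permK u t) frozen. Qed.

Lemma frozen_up x (k : nat) :
  (i < u x < l)%N -> (k < u x)%N -> crossable w p x k -> (x < p)%N.
Proof.
move=> /frozen_at wx kx; rewrite /crossable; case: (ltnP x p) => // _.
by rewrite wx leqNgt kx.
Qed.

Lemma frozen_down y (k : nat) :
  (i < u y < l)%N -> (u y <= k)%N -> crossable w p y k -> (p <= y)%N.
Proof.
move=> /frozen_at wy yk; rewrite /crossable; case: (ltnP y p) => // _.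
by rewrite wy ltnNge yk.
Qed.

Lemma edge_weight_conflict x y : conflict w p u x y ->
  edge_weight y < edge_weight x \/ x = (u^-1)%g l /\ y = (u^-1)%g i.
Proof.
case/conflictP=> k [/andP[yk kx] cxk cyk]; have lt_yx := leq_ltn_trans yk kx.
have n_pos : 0 < (2 * n)%:R :> R by rewrite ltr0n; move: (ltn_ord l); lia.
have below_2n t : ~~ (i < u t < l)%N -> (if ((u t : nat) == i) || ((u t : nat) == l)
    then (i + l)%:R else (2 * u t)%:R) < (2 * n)%:R :> R.
  by move: (ltn_ord l) (ltn_ord (u t)) => ln utn _; case: ifP => _; rewrite ltr_nat; lia.
rewrite /edge_weight; have [Mx|Mx] := boolP (i < u x < l)%N.
  left; rewrite (frozen_up Mx kx cxk); have [My|My] := boolP (i < u y < l)%N.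
    by rewrite ltnNge (frozen_down My yk cyk) /= gtrN.
  exact: below_2n.
have [My|My] := boolP (i < u y < l)%N.
  left; rewrite ltnNge (frozen_down My yk cyk) /=.
  apply: (@lt_le_trans _ _ 0); first by rewrite oppr_lt0.
  by case: ifP => _; rewrite ler0n.
have [ends|ends] := boolP (((u x : nat) == l) && ((u y : nat) == i)).
  case/andP: ends => /eqP ux /eqP uy; right.
  by split; apply: (perm_inj (s := u)); apply: val_inj; rewrite permKV.
left; move: Mx My ends lt_yx; case: ifP => ey; case: ifP => ex; rewrite ltr_nat;
  clear -il ex ey; lia.
Qed.

Lemma edge_weight_ends : edge_weight ((u^-1)%g i) = edge_weight ((u^-1)%g l).
Proof. by rewrite /edge_weight !permKV !eqxx orbT !ltnn andbF. Qed.

Lemma v_tperm : v = (tperm ((u^-1)%g i) ((u^-1)%g l) * u)%g.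
Proof. by apply/permP => t; rewrite vE -mulg_tpermJ !permKV permM. Qed.

Lemma edge_weight_max z : in_box w p z ->
  weight edge_weight z <= weight edge_weight u /\
  (weight edge_weight z = weight edge_weight u -> z = u \/ z = v).
Proof.
move=> bz.
have [le_zu eq_zu] := weight_le_exception bu bz edge_weight_ends edge_weight_conflict.
split=> // /eq_zu agree; rewrite v_tperm; apply: perm_agree_off2 agree.
by rewrite (inj_eq perm_inj); apply: contraTneq il => ->; rewrite ltnn.
Qed.

End EdgeBackward.

Section Edges.
Local Open Scope ring_scope.
Variables (R : realFieldType) (n : nat) (w : {perm 'I_n}) (p : nat).
Hypothesis w_split : split_increasing w p.
Variables (u v : {perm 'I_n}).
Hypotheses (bu : in_box w p u) (bv : in_box w p v).

Lemma edge_forward : is_edge (bip_points R 1%g w) (perm_pt R u) (perm_pt R v) ->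
  frozen_transposition w u v.
Proof.
case=> nab [c /edge_support[_ _ max_u vu on_uv]].
have dotE z : dotv c (perm_pt R z) = weight (fun t => c 0 t) z + \sum_t c 0 t.
  exact: dotv_perm_pt.
have inS z : in_box w p z -> conv (bip_points R 1%g w) (perm_pt R z).
  by case/(bip_points_index R w_split) => k <-; apply: conv_nth.
have nuv : u != v by apply/eqP => e; apply: nab; rewrite e.
have Euv : weight (fun t => c 0 t) u = weight (fun t => c 0 t) v.
  by apply: (addIr (\sum_t c 0 t)); rewrite -!dotE vu.
have u_max z : in_box w p z -> weight (fun t => c 0 t) z <= weight (fun t => c 0 t) u.
  by move=> bz; rewrite -(lerD2r (\sum_t c 0 t)) -!dotE; apply/max_u/inS.
have u_v_only z : in_box w p z ->
    weight (fun t => c 0 t) z = weight (fun t => c 0 t) u -> z = u \/ z = v.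
  move=> bz E.
  have /conv2P[l0 [l1 [? ? l01 zE]]] : conv [:: perm_pt R u; perm_pt R v] (perm_pt R z).
    by apply: on_uv; [apply: inS | rewrite !dotE E].
  exact: perm_pt_segment zE.
have [x [y [lt_yx ev]]] := edge_is_swap bu bv nuv Euv u_max u_v_only.
have frozen := edge_swap_frozen bu bv Euv u_max u_v_only lt_yx ev.
have vE t : v t = tperm (u y) (u x) (u t) by rewrite ev -mulg_tpermJ permM tpermC.
exists (u y), (u x); split=> //; split=> // m ym mx.
have uw : (u^-1)%g m = (w^-1)%g m.
  by apply: (perm_inj (s := w)); rewrite permKV frozen // ym mx.
split=> //; rewrite -uw; apply: (perm_inj (s := v)); rewrite permKV vE permKV.
by rewrite tpermD //; apply/eqP => e; [move: ym | move: mx]; rewrite e ltnn.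
Qed.

Lemma edge_backward : frozen_transposition w u v ->
  is_edge (bip_points R 1%g w) (perm_pt R u) (perm_pt R v).
Proof.
case=> i [l [il [vE uvw]]].
have frozen (m : 'I_n) : (i < m)%N -> (m < l)%N -> w ((u^-1)%g m) = m.
  by move=> im ml; rewrite (uvw m im ml).1 permKV.
pose ew := @edge_weight n p R u i l.
pose c : 'rV[R]_n := \row_t ew t.
have dotE z : dotv c (perm_pt R z) = weight ew z + \sum_t ew t.
  rewrite dotv_perm_pt /weight; congr (_ + _); apply: eq_bigr => t _; rewrite mxE //.
have [ia ea] := bip_points_index R w_split bu.
have [ib eb] := bip_points_index R w_split bv.
have nab : perm_pt R u != perm_pt R v.
  apply/eqP => /perm_pt_inj uv; move: (vE ((u^-1)%g i)); rewrite -uv permKV tpermL.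
  by move/(congr1 val) => /= li; move: il; rewrite li ltnn.
split; first exact/eqP.
exists c; rewrite -ea -eb; apply: face_segment; rewrite ?ea ?eb //.
- move=> k; have [z [bz ->]] := bip_points_nth w_split k.
  by rewrite !dotE lerD2r; case: (edge_weight_max R bu il vE frozen bz).
- by rewrite !dotE (v_tperm vE) weight_tperm /ew edge_weight_ends subrr mul0r addr0.
- move=> k; have [z [bz ->]] := bip_points_nth w_split k.
  by rewrite !dotE => /addIr /(edge_weight_max R bu il vE frozen bz).2[->|->]; [left|right].
Qed.

End Edges.

Theorem corollary4p3 (R : realFieldType) (n : nat) (w u v : {perm 'I_n}) :
  grassmannian w ->
  bruhat_le 1%g u -> bruhat_le u w ->
  bruhat_le 1%g v -> bruhat_le v w ->
  (is_edge (bip_points R 1%g w) (perm_pt R u) (perm_pt R v) <->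
   exists i l : 'I_n, (i < l)%N /\ (forall x, v x = tperm i l (u x)) /\
     forall m : 'I_n, (i < m)%N -> (m < l)%N ->
       (u^-1)%g m = (w^-1)%g m /\ (v^-1)%g m = (w^-1)%g m).
Proof.
move=> /grassmannian_split[p w_split] _ uw _ vw.
have bu := in_box_of_bruhat_le w_split uw; have bv := in_box_of_bruhat_le w_split vw.
by split; [apply: (edge_forward w_split) | apply: (edge_backward R w_split)].
Qed.
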